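(* Let $\mathsf{InSeq}$ be the type of initial sequences in $\{-,+\}$ (with $-<+$), i.e. sequences $(u_n)_{n<\alpha}$ indexed by the ordinals below some ordinal $\alpha$. Order them by: $(u_n)_{n<\alpha}<(v_n)_{n<\alpha'}$ iff (propositionally truncated) there is an ordinal $i$ such that $u_j=v_j$ for all $j<i$ and $u_i<v_i$, where a nonexistent term is treated as a value $\emptyset$ with $-<\emptyset<+$, and where $\neg(()<())$ for the empty sequence $()$. Then $<$ on $\mathsf{InSeq}$ is cotransitive: for all $u,v,w:\mathsf{InSeq}$, $u<v$ implies $u<w$ or $w<v$.
   Context: Ordinals are in the sense of the HoTT book: a set with a well-founded, extensional, transitive relation $<$. *)

(* Ordinals in the sense of the HoTT book. *)

Record Ordinal : Type := {
  carrier :> Type;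
  olt : carrier -> carrier -> Prop;
  olt_wf : well_founded olt;
  olt_ext : forall x y : carrier, (forall z, olt z x <-> olt z y) -> x = y;
  olt_trans : forall x y z : carrier, olt x y -> olt y z -> olt x z
}.

Definition rel_iso (A : Type) (RA : A -> A -> Prop) (B : Type) (RB : B -> B -> Prop) : Prop :=
  exists (f : A -> B) (g : B -> A),
    (forall x, g (f x) = x) /\ (forall y, f (g y) = y) /\
    (forall x y, RA x y <-> RB (f x) (f y)).

Definition seg_carrier (al : Ordinal) (a : al) : Type := { x : al | olt al x a }.
Definition seg_lt (al : Ordinal) (a : al) (x y : seg_carrier al a) : Prop :=
  olt al (proj1_sig x) (proj1_sig y).

Definition ord_at (i al : Ordinal) (a : al) : Prop :=
  rel_iso (carrier i) (olt i) (seg_carrier al a) (seg_lt al a).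

Definition ord_lt (i al : Ordinal) : Prop := exists a : al, ord_at i al a.

Inductive Sign : Type := Minus | Plus.

(** Extended values: [Some s] for an existing term, [None] for the absent term
    (the value "empty"), with Minus < None < Plus. *)
Definition ext_lt (x y : option Sign) : Prop :=
  match x, y with
  | Some Minus, None => True
  | None, Some Plus => True
  | Some Minus, Some Plus => True
  | _, _ => False
  end.

(** Initial sequences: an ordinal alpha together with a sequence indexed by
    the ordinals below alpha (equivalently, by the elements of alpha). *)
Definition InSeq : Type := { al : Ordinal & carrier al -> Sign }.

Definition term (u : InSeq) (i : Ordinal) (x : option Sign) : Prop :=
  match x with
  | Some s => exists a : projT1 u, ord_at i (projT1 u) a /\ projT2 u a = s
  | None => forall a : projT1 u, ~ ord_at i (projT1 u) a
  end.

Definition inseq_lt (u v : InSeq) : Prop :=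
  exists i : Ordinal,
    (forall j : Ordinal, ord_lt j i -> forall x, term u j x <-> term v j x) /\
    (exists x y, term u i x /\ term v i y /\ ext_lt x y).

(* Let i witness u < v, so u and v agree below i and u_i < v_i.  If w also
   agrees with u below i, cotransitivity of the three-element order
   - < empty < + at the index i settles the claim.  Otherwise, by
   well-foundedness, there is a first index k < i where u and w differ; there
   u_k = v_k, and trichotomy gives u_k < w_k (so u < w) or w_k < u_k = v_k
   (so w < v).  The only real work is showing that an ordinal is isomorphic
   to at most one initial segment alpha/a of alpha (an isomorphism between
   two initial segments is the identity, by well-founded induction), so
   that the k-th term of a sequence is well defined. *)

From Stdlib Require Import Classical ProofIrrelevance Wellfounded.Inverse_Image.

Lemma rel_iso_refl {A} (R : A -> A -> Prop) : rel_iso A R A R.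
Proof. exists (fun x => x), (fun x => x). repeat split; tauto. Qed.

Lemma rel_iso_sym {A RA B RB} : rel_iso A RA B RB -> rel_iso B RB A RA.
Proof.
  intros [f [g [gf [fg Hf]]]]. exists g, f. repeat split; auto.
  - intros H. apply Hf. rewrite !fg. exact H.
  - intros H. apply Hf in H. rewrite !fg in H. exact H.
Qed.

Lemma rel_iso_trans {A RA B RB C RC} :
  rel_iso A RA B RB -> rel_iso B RB C RC -> rel_iso A RA C RC.
Proof.
  intros [f [g [gf [fg Hf]]]] [f' [g' [gf' [fg' Hf']]]].
  exists (fun x => f' (f x)), (fun z => g (g' z)). repeat split.
  - intros x. rewrite gf'. apply gf.
  - intros z. rewrite fg. apply fg'.
  - intros H. apply Hf', Hf, H.
  - intros H. apply Hf, Hf', H.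
Qed.

Definition seg_ordinal (al : Ordinal) (a : al) : Ordinal.
Proof.
  refine {| carrier := seg_carrier al a; olt := seg_lt al a |}.
  - exact (wf_inverse_image _ _ (olt al) (@proj1_sig _ _) (olt_wf al)).
  - intros [x px] [y py] H. unfold seg_lt in H; simpl in H.
    assert (x = y) as <-.
    { apply olt_ext. intros z. split; intros Hz.
      - exact (proj1 (H (exist _ z (olt_trans al _ _ _ Hz px))) Hz).
      - exact (proj2 (H (exist _ z (olt_trans al _ _ _ Hz py))) Hz). }
    f_equal. apply proof_irrelevance.
  - intros x y z. apply olt_trans.
Defined.

Lemma ord_at_seg_ordinal (al : Ordinal) (a : al) : ord_at (seg_ordinal al a) al a.
Proof. apply rel_iso_refl. Qed.

Section SegmentIsoEq.

Variables (al : Ordinal) (a b : al).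
Variables (h : seg_carrier al a -> seg_carrier al b)
          (k : seg_carrier al b -> seg_carrier al a).
Hypothesis hk : forall y, h (k y) = y.
Hypothesis h_lt : forall x y, seg_lt al a x y <-> seg_lt al b (h x) (h y).

Lemma seg_iso_fixpoint (x : seg_carrier al a) : proj1_sig (h x) = proj1_sig x.
Proof.
  induction x as [x IH] using (well_founded_ind (olt_wf (seg_ordinal al a))).
  apply olt_ext. intros z. split; intros Hz.
  - set (y := k (exist _ z (olt_trans al _ _ _ Hz (proj2_sig (h x))))).
    assert (Hyx : seg_lt al a y x).
    { apply h_lt. unfold y. rewrite hk. exact Hz. }
    assert (Hzy : z = proj1_sig y).
    { rewrite <- (IH y Hyx). unfold y. rewrite hk. reflexivity. }
    rewrite Hzy. exact Hyx.
  - set (y := exist (fun t => olt al t a) z (olt_trans al _ _ _ Hz (proj2_sig x))).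
    assert (Hyx : seg_lt al a y x) by exact Hz.
    change z with (proj1_sig y). rewrite <- (IH y Hyx). apply h_lt, Hyx.
Qed.

Lemma seg_iso_eq_point : a = b.
Proof.
  apply olt_ext. intros z. split; intros Hz.
  - pose proof (seg_iso_fixpoint (exist _ z Hz)) as Hfix. simpl in Hfix.
    rewrite <- Hfix. apply proj2_sig.
  - pose proof (seg_iso_fixpoint (k (exist _ z Hz))) as Hfix.
    rewrite hk in Hfix. simpl in Hfix. rewrite Hfix. apply proj2_sig.
Qed.

End SegmentIsoEq.

Lemma seg_iso_eq (al : Ordinal) (a b : al) :
  rel_iso (seg_carrier al a) (seg_lt al a) (seg_carrier al b) (seg_lt al b) -> a = b.
Proof.
  intros [h [k [_ [hk h_lt]]]]. exact (seg_iso_eq_point al a b h k hk h_lt).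
Qed.

Lemma ord_at_unique (j al : Ordinal) (a b : al) :
  ord_at j al a -> ord_at j al b -> a = b.
Proof.
  intros Ha Hb. apply seg_iso_eq. exact (rel_iso_trans (rel_iso_sym Ha) Hb).
Qed.

Lemma seg_seg_iso (al : Ordinal) (a : al) (d : seg_carrier al a) :
  rel_iso (seg_carrier (seg_ordinal al a) d) (seg_lt (seg_ordinal al a) d)
          (seg_carrier al (proj1_sig d)) (seg_lt al (proj1_sig d)).
Proof.
  destruct d as [d pd].
  exists (fun y : seg_carrier (seg_ordinal al a) (exist _ d pd) =>
            exist (fun x => olt al x d) (proj1_sig (proj1_sig y)) (proj2_sig y)).
  exists (fun x : seg_carrier al d =>
            exist (fun y : seg_carrier al a => seg_lt al a y (exist _ d pd))
              (exist (fun x => olt al x a) (proj1_sig x)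
                 (olt_trans al _ _ _ (proj2_sig x) pd)) (proj2_sig x)).
  repeat split; try (intros H; exact H).
  - intros [[y py] qy]. simpl.
    rewrite (proof_irrelevance _ (olt_trans al y d a qy pd) py). reflexivity.
  - intros [y py]. reflexivity.
Qed.

Lemma ord_lt_seg_ordinal_inv (al : Ordinal) (a : al) (j : Ordinal) :
  ord_lt j (seg_ordinal al a) -> exists b, olt al b a /\ ord_at j al b.
Proof.
  intros [d Hd]. exists (proj1_sig d). split.
  - apply proj2_sig.
  - exact (rel_iso_trans Hd (seg_seg_iso al a d)).
Qed.

Lemma term_exists (u : InSeq) (j : Ordinal) : exists x, term u j x.
Proof.
  destruct (classic (exists a, ord_at j (projT1 u) a)) as [[a Ha] | Hn].
  - exists (Some (projT2 u a)). exists a. auto.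
  - exists None. intros a Ha. apply Hn. exists a. exact Ha.
Qed.

Lemma term_unique (u : InSeq) (j : Ordinal) x x' :
  term u j x -> term u j x' -> x = x'.
Proof.
  destruct x as [s|], x' as [s'|]; simpl.
  - intros [a [Ha <-]] [b [Hb <-]]. rewrite (ord_at_unique _ _ _ _ Ha Hb). reflexivity.
  - intros [a [Ha _]] H. contradiction (H a Ha).
  - intros H [a [Ha _]]. contradiction (H a Ha).
  - reflexivity.
Qed.

Lemma term_iso (u : InSeq) (j j' : Ordinal) x :
  rel_iso j (olt j) j' (olt j') -> term u j x -> term u j' x.
Proof.
  intros H. destruct x as [s|]; simpl.
  - intros [a [Ha Hs]]. exists a. split; [exact (rel_iso_trans (rel_iso_sym H) Ha) | exact Hs].
  - intros Hn a Ha. exact (Hn a (rel_iso_trans H Ha)).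
Qed.

Definition agree (u w : InSeq) (j : Ordinal) : Prop := forall x, term u j x <-> term w j x.

Definition agree_below (u w : InSeq) (i : Ordinal) : Prop :=
  forall j, ord_lt j i -> agree u w j.

Lemma agree_of_term (u w : InSeq) (j : Ordinal) x :
  term u j x -> term w j x -> agree u w j.
Proof.
  intros Hu Hw x'. split; intros H.
  - rewrite <- (term_unique _ _ _ _ Hu H). exact Hw.
  - rewrite <- (term_unique _ _ _ _ Hw H). exact Hu.
Qed.

Lemma agree_iso (u w : InSeq) (j j' : Ordinal) :
  rel_iso j (olt j) j' (olt j') -> agree u w j -> agree u w j'.
Proof.
  intros H Huw x. split; intros Hx.
  - apply (term_iso _ _ _ _ H), Huw, (term_iso _ _ _ _ (rel_iso_sym H)), Hx.
  - apply (term_iso _ _ _ _ H), Huw, (term_iso _ _ _ _ (rel_iso_sym H)), Hx.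
Qed.

Lemma agree_below_trans (u v w : InSeq) (i : Ordinal) :
  agree_below u w i -> agree_below u v i -> agree_below w v i.
Proof. intros Huw Huv j Hj x. rewrite <- (Huw j Hj x). apply Huv, Hj. Qed.

Lemma agree_below_seg_ordinal (u w : InSeq) (i : Ordinal) (c : i) :
  agree_below u w i -> agree_below u w (seg_ordinal i c).
Proof.
  intros Huw j Hj. destruct (ord_lt_seg_ordinal_inv i c j Hj) as [b [_ Hb]].
  apply Huw. exists b. exact Hb.
Qed.

Lemma wf_min_counterexample {A} (R : A -> A -> Prop) (P : A -> Prop) :
  well_founded R ->
  (forall c, P c) \/ exists c, ~ P c /\ forall c', R c' c -> P c'.
Proof.
  intros Hwf. destruct (classic (exists c, ~ P c /\ forall c', R c' c -> P c')) as [H | Hn].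
  - right. exact H.
  - left. intros c. induction c as [c IH] using (well_founded_ind Hwf).
    apply NNPP. intros Hc. apply Hn. exists c. auto.
Qed.

Lemma agree_below_or_first_disagreement (u w : InSeq) (i : Ordinal) :
  agree_below u w i \/
  exists c : i, agree_below u w (seg_ordinal i c) /\ ~ agree u w (seg_ordinal i c).
Proof.
  destruct (wf_min_counterexample _ (fun c => agree u w (seg_ordinal i c)) (olt_wf i))
    as [Hall | [c [Hc Hmin]]].
  - left. intros j [c Hj]. exact (agree_iso u w (seg_ordinal i c) j (rel_iso_sym Hj) (Hall c)).
  - right. exists c. split; [|exact Hc].
    intros j Hj. destruct (ord_lt_seg_ordinal_inv i c j Hj) as [b [Hb Hjb]].
    exact (agree_iso u w (seg_ordinal i b) j (rel_iso_sym Hjb) (Hmin b Hb)).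
Qed.

Lemma ext_lt_cotrans x y z : ext_lt x y -> ext_lt x z \/ ext_lt z y.
Proof. destruct x as [[]|], y as [[]|], z as [[]|]; simpl; tauto. Qed.

Lemma ext_lt_total x z : x <> z -> ext_lt x z \/ ext_lt z x.
Proof. destruct x as [[]|], z as [[]|]; simpl; tauto. Qed.

Lemma inseq_lt_intro (u v : InSeq) (i : Ordinal) x y :
  agree_below u v i -> term u i x -> term v i y -> ext_lt x y -> inseq_lt u v.
Proof. intros Huv Hx Hy Hxy. exists i. split; [exact Huv|]. exists x, y. auto. Qed.

Theorem mainTheorem6 :
  forall u v w : InSeq, inseq_lt u v -> inseq_lt u w \/ inseq_lt w v.
Proof.
  intros u v w [i [Huv [x [y [Hx [Hy Hxy]]]]]].
  destruct (agree_below_or_first_disagreement u w i) as [Huw | [c [Huw Hne]]].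
  - destruct (term_exists w i) as [z Hz].
    destruct (ext_lt_cotrans x y z Hxy) as [Hxz | Hzy].
    + left. exact (inseq_lt_intro u w i x z Huw Hx Hz Hxz).
    + right. exact (inseq_lt_intro w v i z y (agree_below_trans u v w i Huw Huv) Hz Hy Hzy).
  - set (k := seg_ordinal i c).
    assert (Huvk : agree_below u v k) by exact (agree_below_seg_ordinal u v i c Huv).
    assert (Huv_at_k : agree u v k) by exact (Huv k (ex_intro _ c (ord_at_seg_ordinal i c))).
    destruct (term_exists u k) as [x0 Hx0], (term_exists w k) as [z0 Hz0].
    assert (Hx0z0 : x0 <> z0) by (intros <-; exact (Hne (agree_of_term u w k x0 Hx0 Hz0))).
    destruct (ext_lt_total x0 z0 Hx0z0) as [Hlt | Hlt].
    + left. exact (inseq_lt_intro u w k x0 z0 Huw Hx0 Hz0 Hlt).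
    + right. apply (inseq_lt_intro w v k z0 x0 (agree_below_trans u v w k Huw Huvk) Hz0).
      * apply Huv_at_k, Hx0.
      * exact Hlt.
Qed.
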